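(* Let $\mathcal{N}$ be a sum-network over a finite field $F$ with $m$ sources and $n$ terminals, where $\min\{m,n\}=3$, and such that $\text{min-cut}(s_i-t_j)\ge 1$ for every source $s_i$ and terminal $t_j$ (i.e., every terminal is reachable from every source). Then the linear coding capacity of $\mathcal{N}$ is at least $2/3$.
   Context: A sum-network is a finite directed acyclic multigraph with distinguished source nodes $s_1,\dots,s_m$ and terminal nodes $t_1,\dots,t_n$; each edge carries one alphabet symbol per use. A $(k,l)$ fractional network code over $F$: each source $s_i$ holds $X_i\in F^k$ and sends on each outgoing edge a function $F^k\to F^l$ of $X_i$; each edge whose tail $v$ is not a source carries a function $F^{l|In(v)|}\to F^l$ of the vectors on the incoming edges of $v$; each terminal applies a decoding function $F^{l|In(t)|}\to F^k$. It is a solution if every terminal outputs $X_1+\cdots+X_m$ for all messages. The code is linear if all these functions are $F$-linear. The linear coding capacity is the supremum of $k/l$ over all linear $(k,l)$ fractional solutions. $\text{min-cut}(s_i-t_j)$ is the minimum number of edges whose removal disconnects $t_j$ from $s_i$. *)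

From HB Require Import structures.
From mathcomp Require Import all_boot all_order all_algebra.
Set Implicit Arguments. Unset Strict Implicit. Unset Printing Implicit Defensive.
Import Order.TTheory GRing.Theory Num.Theory.
Local Open Scope ring_scope.

Definition adj (V E : finType) (tail head : E -> V) : rel V :=
  fun u v => [exists e : E, (tail e == u) && (head e == v)].

Definition acyclic (V E : finType) (tail head : E -> V) : Prop :=
  forall e : E, ~~ connect (adj tail head) (head e) (tail e).

Record sum_network (m n : nat) := SumNetwork {
  sn_V : finType;
  sn_E : finType;
  sn_tail : sn_E -> sn_V;
  sn_head : sn_E -> sn_V;
  sn_src : 'I_m -> sn_V;
  sn_term : 'I_n -> sn_V;
  sn_acyclic : acyclic sn_tail sn_head;
  sn_src_inj : injective sn_src;
  sn_term_inj : injective sn_term;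
  sn_src_noin : forall (e : sn_E) (i : 'I_m), sn_head e != sn_src i;
  sn_term_noout : forall (e : sn_E) (j : 'I_n), sn_tail e != sn_term j
}.

Definition sn_adj m n (N : sum_network m n) : rel (sn_V N) :=
  adj (@sn_tail m n N) (@sn_head m n N).

(* A (k,l) linear fractional network code over F (row-vector convention:
   a linear map F^a -> F^b is x |-> x *m M with M : 'M_(a,b); a linear map
   on the concatenation of the incoming vectors is a sum of blocks). *)
Record lin_code (F : fieldType) m n (N : sum_network m n) (k l : nat) :=
  LinCode {
  lc_src : sn_E N -> 'M[F]_(k, l);            (* used on edges out of sources *)
  lc_mid : sn_E N -> sn_E N -> 'M[F]_(l, l);   (* lc_mid e' e : block from in-edge e' to e *)
  lc_dec : 'I_n -> sn_E N -> 'M[F]_(l, k)      (* decoding block at terminal j for in-edge e' *)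
}.

Definition consistent (F : fieldType) m n (N : sum_network m n) k l
  (C : lin_code F N k l) (X : 'I_m -> 'rV[F]_k) (y : sn_E N -> 'rV[F]_l) : Prop :=
  forall e : sn_E N,
    (forall i : 'I_m, sn_tail e = sn_src N i -> y e = X i *m lc_src C e) /\
    ((forall i : 'I_m, sn_tail e != sn_src N i) ->
       y e = \sum_(e' : sn_E N | sn_head e' == sn_tail e) y e' *m lc_mid C e' e).

Definition terminal_output (F : fieldType) m n (N : sum_network m n) k l
  (C : lin_code F N k l) (y : sn_E N -> 'rV[F]_l) (j : 'I_n) : 'rV[F]_k :=
  \sum_(e' : sn_E N | sn_head e' == sn_term N j) y e' *m lc_dec C j e'.

Definition is_solution (F : fieldType) m n (N : sum_network m n) k l
  (C : lin_code F N k l) : Prop :=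
  forall (X : 'I_m -> 'rV[F]_k) (y : sn_E N -> 'rV[F]_l),
    consistent C X y -> forall j : 'I_n, terminal_output C y j = \sum_(i < m) X i.

(* "linear coding capacity >= r": the supremum of k/l over linear (k,l)
   fractional solutions (k, l >= 1) is at least r. *)
Definition linear_capacity_ge (F : fieldType) m n (N : sum_network m n) (r : rat)
  : Prop :=
  forall q : rat, q < r ->
    exists (k l : nat) (C : lin_code F N k l),
      [/\ (0 < k)%N, (0 < l)%N, is_solution C & q < k%:R / l%:R].
Arguments sn_adj {m n} N.
Arguments sn_src {m n} s _.
Arguments sn_term {m n} s _.

From HB Require Import structures.
From mathcomp Require Import all_boot all_order all_algebra.
Set Implicit Arguments. Unset Strict Implicit. Unset Printing Implicit Defensive.
Import Order.TTheory GRing.Theory Num.Theory.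
Local Open Scope ring_scope.

(* Take (k, l) = (2, 3) and write each message as X_p = (a_p, b_p).  An edge whose
   set of upstream sources is T carries the two partial sums of the a_p and of the
   b_p over p in T, plus, when T is a pair, one extra symbol.  The symbols of
   T1 :|: T2 are linear functions of those of T1 and T2: by duality it suffices that
   messages annihilating the symbols of T1 and of T2 annihilate those of T1 :|: T2,
   which for two distinct pairs holds because their extra symbols are independent
   on the shared source.  Hence every node computes the symbols of its upstream set
   from its in-edges, and a terminal, reached by all sources, reads off the sums.
   With three terminals the same code is used backwards, indexed by downstream sets
   of terminals and with transposed local maps; the contribution of the edges to
   the output of terminal j is then a flow, conserved at inner nodes, equal to X_i
   out of source i and absorbed only at terminal j. *)

Lemma sum_row_mx (R : nmodType) (I : Type) (r : seq I) (P : pred I) m n1 n2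
    (A : I -> 'M[R]_(m, n1)) (B : I -> 'M[R]_(m, n2)) :
  \sum_(i <- r | P i) row_mx (A i) (B i)
    = row_mx (\sum_(i <- r | P i) A i) (\sum_(i <- r | P i) B i).
Proof. by elim/big_rec3: _ => [|i x y z _ ->]; rewrite ?row_mx0 ?add_row_mx. Qed.

Lemma sub_sums_genmx_annihilator (F : fieldType) (I : finType) (P : pred I) m n p
    (A : 'M[F]_(m, p)) (B_ : I -> 'M[F]_(n, p)) :
    (forall x : 'M[F]_p, (forall i, P i -> B_ i *m x = 0) -> A *m x = 0) ->
  (A <= \sum_(i | P i) <<B_ i>>)%MS.
Proof.
move=> annihA; rewrite submxE; apply/eqP/annihA => i Pi; apply/eqP.
by rewrite -submxE (sumsmx_sup i) // genmxE.
Qed.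

Lemma sum_mulmx_exchange (R : pzSemiRingType) (I J : finType) (P : pred I) (Q : pred J)
    k a b c (X : J -> 'M[R]_(k, a)) (M : I -> J -> 'M[R]_(a, b)) (B : I -> 'M[R]_(b, c)) :
  \sum_(i | P i) (\sum_(j | Q j) X j *m M i j) *m B i
    = \sum_(j | Q j) X j *m \sum_(i | P i) M i j *m B i.
Proof.
under eq_bigr do rewrite mulmx_suml; rewrite exchange_big /=.
by apply: eq_bigr => j _; rewrite mulmx_sumr; apply: eq_bigr => i _; rewrite mulmxA.
Qed.

Section Code.
Variable F : fieldType.
Local Notation e_ r := (delta_mx r 0 : 'cV[F]_2).

(* The extra symbol of a pair of sources, as (source, functional):
   a_0 on {0,1}, b_0 on {0,2} and a_1 + b_1 on {1,2}. *)
Definition third_symbol (T : {set 'I_3}) : 'I_3 * 'cV[F]_2 :=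
  if T == [set~ 2] then (0, e_ 0)
  else if T == [set~ 1] then (0, e_ 1)
  else if T == [set~ 0] then (1, e_ 0 + e_ 1)
  else (0, 0).

Definition symbol_block (T : {set 'I_3}) (p : 'I_3) : 'M[F]_(2, 2 + 1) :=
  row_mx ((p \in T)%:R%:M) ((p == (third_symbol T).1)%:R *: (third_symbol T).2).

Definition symbol k (T : {set 'I_3}) (X : 'I_3 -> 'M[F]_(k, 2)) : 'M[F]_(k, 2 + 1) :=
  \sum_p X p *m symbol_block T p.

Lemma symbol_split k (T : {set 'I_3}) (X : 'I_3 -> 'M[F]_(k, 2)) :
  symbol T X = row_mx (\sum_(p in T) X p) (X (third_symbol T).1 *m (third_symbol T).2).
Proof.
rewrite /symbol /symbol_block; under eq_bigr do rewrite mul_mx_row mul_mx_scalar -scalemxAr.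
rewrite sum_row_mx; congr row_mx.
  rewrite [RHS]big_mkcond; apply: eq_bigr => p _.
  by case: (p \in T); rewrite ?scale1r ?scale0r.
rewrite (bigD1 (third_symbol T).1) //= eqxx scale1r big1 ?addr0 // => p /negbTE->.
by rewrite scale0r.
Qed.

Lemma symbol_eq0 k (T : {set 'I_3}) (X : 'I_3 -> 'M[F]_(k, 2)) :
  symbol T X = 0 <->
  \sum_(p in T) X p = 0 /\ X (third_symbol T).1 *m (third_symbol T).2 = 0.
Proof.
rewrite symbol_split; split => [/eqP|[-> ->]]; last exact: row_mx0.
by rewrite row_mx_eq0 => /andP[/eqP-> /eqP->].
Qed.

Lemma third_symbol_nonpair (T : {set 'I_3}) : #|T| != 2 -> third_symbol T = (0, 0).
Proof.
by rewrite /third_symbol; do 3 (case: ifP => [/eqP->|_]; first by rewrite cardsC1 card_ord).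
Qed.

Lemma third_symbol_supp (T : {set 'I_3}) :
  (third_symbol T).1 \notin T -> (third_symbol T).2 = 0.
Proof.
by rewrite /third_symbol; do 3 (case: ifP => [/eqP->|_]; first by rewrite in_setC1).
Qed.

Lemma symbol_block_notin (T : {set 'I_3}) p : p \notin T -> symbol_block T p = 0.
Proof.
move=> pT; rewrite /symbol_block (negbTE pT) raddf0.
case: eqP => [third_T|_]; last by rewrite scale0r row_mx0.
by rewrite third_symbol_supp -?third_T ?scaler0 ?row_mx0.
Qed.

Lemma symbol_supp k (T : {set 'I_3}) (X : 'I_3 -> 'M[F]_(k, 2)) :
  (forall p, p \in T -> X p = 0) -> symbol T X = 0.
Proof.
move=> X0; rewrite /symbol big1 // => p _.
by case: (boolP (p \in T)) => [/X0->|/symbol_block_notin->]; rewrite ?mul0mx ?mulmx0.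
Qed.

Lemma symbol_set1 k i (X : 'I_3 -> 'M[F]_(k, 2)) :
  symbol [set i] X = X i *m row_mx 1%:M 0.
Proof.
by rewrite symbol_split third_symbol_nonpair ?cards1 // mulmx0 big_set1 mul_mx_row mulmx1 mulmx0.
Qed.

Lemma symbol_setT k (X : 'I_3 -> 'M[F]_(k, 2)) :
  symbol setT X = row_mx (\sum_p X p) 0.
Proof.
rewrite symbol_split third_symbol_nonpair ?cardsT ?card_ord // mulmx0.
by congr row_mx; apply: eq_bigl => p; rewrite in_setT.
Qed.

Lemma symbol_set1_eq0 k i (X : 'I_3 -> 'M[F]_(k, 2)) : symbol [set i] X = 0 -> X i = 0.
Proof. by case/symbol_eq0; rewrite big_set1. Qed.

Lemma symbol_setC1_sum k r (X : 'I_3 -> 'M[F]_(k, 2)) :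
  symbol [set~ r] X = 0 -> \sum_p X p = X r.
Proof.
case/symbol_eq0 => sumC _; rewrite (bigD1 r) //= -[RHS]addr0; congr (_ + _).
by rewrite -[RHS]sumC; apply: eq_bigl => p; rewrite in_setC1.
Qed.

Lemma ord3P (r : 'I_3) : [\/ r = 0, r = 1 | r = 2].
Proof.
by case: r => [[|[|[|//]]] ?]; [apply: Or31 | apply: Or32 | apply: Or33]; apply: val_inj.
Qed.

Lemma col2_eq0 k (Y : 'M[F]_(k, 2)) : Y *m e_ 0 = 0 -> Y *m e_ 1 = 0 -> Y = 0.
Proof.
rewrite -!colE => /matrixP Y0 /matrixP Y1; apply/matrixP => i j.
have [->|->] : j = 0 \/ j = 1 by case: j => [[|[|//]] ?]; [left|right]; apply: val_inj.
- by have := Y0 i 0; rewrite !mxE.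
- by have := Y1 i 0; rewrite !mxE.
Qed.

Lemma symbol_setC1_pair k r r' (X : 'I_3 -> 'M[F]_(k, 2)) : r != r' ->
  symbol [set~ r] X = 0 -> symbol [set~ r'] X = 0 -> \sum_p X p = 0.
Proof.
move=> neq_rr' Zr Zr'; wlog lt_rr' : r r' neq_rr' Zr Zr' / (r < r')%N => [wlog|].
  move: (neq_rr'); rewrite -val_eqE neq_ltn => /orP[lt_rr'|lt_r'r].
    exact: (wlog r r').
  by apply: (wlog r' r); rewrite // eq_sym.
have sum3 : \sum_p X p = X 0 + X 1 + X 2.
  by rewrite !big_ord_recr big_ord0 /= add0r; congr (X _ + X _ + X _); apply: val_inj.
move: (symbol_setC1_sum Zr) (symbol_setC1_sum Zr') lt_rr'.
case/symbol_eq0: Zr => _; case/symbol_eq0: Zr' => _.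
rewrite /third_symbol !(inj_eq (@setC_inj _)) !(inj_eq (@set1_inj _)).
(* With S the total sum, S = X r = X r', and two linear conditions on S come from
   the extra symbols. *)
case: (ord3P r) (ord3P r') => -> [] -> //= extra' extra S S' _.
- have b : (\sum_p X p) *m e_ 1 = 0 by rewrite S.
  by apply: (col2_eq0 _ b); move: extra; rewrite -S' mulmxDr b addr0.
- have a : (\sum_p X p) *m e_ 0 = 0 by rewrite S.
  have X1 : X 1 = - \sum_p X p.
    by apply: (addrI (\sum_p X p + \sum_p X p)); rewrite addrK {3}sum3 -S -S' addrAC.
  apply: (col2_eq0 a); move/eqP: extra.
  by rewrite X1 mulNmx mulmxDr a add0r oppr_eq0 => /eqP.
- have X0 : X 0 = 0 by apply: col2_eq0.
  by apply: (addrI (\sum_p X p)); rewrite addr0 {3}sum3 X0 -S -S' add0r.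
Qed.

Lemma subset3_cases (T : {set 'I_3}) :
  [\/ T = set0, exists p, T = [set p], exists r, T = [set~ r] | T = setT].
Proof.
have := cardsC T; rewrite card_ord.
case cardT: #|T| => [|[|[|[|//]]]] cardCT.
- by apply: Or41; apply/eqP; rewrite -cards_eq0 cardT.
- by apply: Or42; apply/cards1P; rewrite cardT.
- have /cards1P[r defCT] : #|~: T| == 1 by rewrite -(eqn_add2l 2) cardCT.
  by apply: Or43; exists r; rewrite -defCT setCK.
- have : #|~: T| == 0 by rewrite -(eqn_add2l 3) cardCT.
  by rewrite cards_eq0 -setCT => /eqP/setC_inj ->; apply: Or44.
Qed.

Lemma symbol_setU k (T1 T2 : {set 'I_3}) (X : 'I_3 -> 'M[F]_(k, 2)) :
  symbol T1 X = 0 -> symbol T2 X = 0 -> symbol (T1 :|: T2) X = 0.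
Proof.
have single_pair p r : symbol [set p] X = 0 -> symbol [set~ r] X = 0 ->
    symbol ([set p] :|: [set~ r]) X = 0.
  case: (eqVneq p r) => [<-|neq_pr] Zp Zr.
    by rewrite setUCr symbol_setT (symbol_setC1_sum Zr) (symbol_set1_eq0 Zp) row_mx0.
  by rewrite (setUidPr _) // sub1set in_setC1.
case: (subset3_cases T1) => [->|[p ->]|[r ->]|->] Z1; rewrite ?set0U ?setTU //;
  case: (subset3_cases T2) => [->|[q ->]|[r' ->]|->] Z2; rewrite ?setU0 ?setUT //.
- apply: symbol_supp => p'; rewrite !inE => /orP[]/eqP->.
    exact: symbol_set1_eq0 Z1.
  exact: symbol_set1_eq0 Z2.
- exact: single_pair.
- by rewrite setUC; apply: single_pair.
- case: (eqVneq r r') => [<-|neq_rr']; first by rewrite setUid.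
  have -> : [set~ r] :|: [set~ r'] = setT.
    by apply/setP => x; rewrite !inE; case: eqP => // ->.
  by rewrite symbol_setT (symbol_setC1_pair neq_rr' Z1 Z2) row_mx0.
Qed.

Lemma symbol_bigcup (I : finType) (P : pred I) (f : I -> {set 'I_3}) k
    (X : 'I_3 -> 'M[F]_(k, 2)) :
  (forall i, P i -> symbol (f i) X = 0) -> symbol (\bigcup_(i | P i) f i) X = 0.
Proof.
move=> Zf; apply: (big_ind (fun T => symbol T X = 0)) => //.
  by apply: symbol_supp => p; rewrite inE.
by move=> T1 T2; apply: symbol_setU.
Qed.

Lemma symbol_mxcol k T (Y : 'M[F]_(k, \sum_(p < 3) 2)) :
  Y *m \mxcol_p symbol_block T p = symbol T (submxrow Y).
Proof. by rewrite -{1}[Y]submxrowK mul_mxrow_mxcol. Qed.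

Lemma symbol_block_span (I : finType) (P : pred I) (f : I -> {set 'I_3}) :
  exists B : I -> 'M[F]_(2 + 1), forall p,
    symbol_block (\bigcup_(i | P i) f i) p = \sum_(i | P i) symbol_block (f i) p *m B i.
Proof.
pose M T := (\mxcol_p symbol_block T p)^T.
have : (M (\bigcup_(i | P i) f i) <= \sum_(i | P i) <<M (f i)>>)%MS.
  apply: sub_sums_genmx_annihilator => x Zx; apply: trmx_inj.
  rewrite trmx_mul trmxK trmx0 symbol_mxcol; apply: symbol_bigcup => i Pi.
  by rewrite -symbol_mxcol -[_ *m _]trmxK trmx_mul trmxK Zx ?trmx0.
case/sub_sums_genmxP => u defM; exists (fun i => (u i)^T) => p.
have /(congr1 (fun A => submxcol A^T p)) := defM.
rewrite trmxK mxcolK raddf_sum submxcol_sum /= => ->.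
by apply: eq_bigr => i _; rewrite trmx_mul trmxK -submxcol_mul mxcolK.
Qed.

Definition sum_proj : 'M[F]_(2 + 1, 2) := col_mx 1%:M 0.

Lemma symbol_block_setT_proj p : symbol_block setT p *m sum_proj = 1%:M.
Proof.
rewrite /symbol_block in_setT third_symbol_nonpair ?cardsT ?card_ord // scaler0.
by rewrite mul_row_col mulmx1 mulmx0 addr0.
Qed.

End Code.

Arguments symbol_block {F} T p.
Arguments sum_proj {F}.

Section Graph.
Variables (m n : nat) (N : sum_network m n).
Local Notation V := (sn_V N).
Local Notation E := (sn_E N).
Local Notation tl := (@sn_tail m n N).
Local Notation hd := (@sn_head m n N).
Local Notation src := (sn_src N).
Local Notation term := (sn_term N).
Local Notation reach := (connect (sn_adj N)).

Lemma edge_adj e : sn_adj N (tl e) (hd e).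
Proof. by apply/existsP; exists e; rewrite !eqxx. Qed.

Lemma adj_edge u v : sn_adj N u v -> exists2 e, tl e = u & hd e = v.
Proof. by case/existsP => e /andP[/eqP tl_e /eqP hd_e]; exists e. Qed.

Lemma reach_last_edge x y : reach x y -> x != y -> exists2 e, reach x (tl e) & hd e = y.
Proof.
case/connectP => p; elim/last_ind: p => [|p z _] xp ->; first by rewrite eqxx.
move: xp; rewrite rcons_path last_rcons => /andP[xp /adj_edge[e tl_e hd_e]] _.
by exists e => //; rewrite tl_e; apply/connectP; exists p.
Qed.

Lemma reach_first_edge x y : reach x y -> x != y -> exists2 e, tl e = x & reach (hd e) y.
Proof.
case/connectP => [[|z p] /= xp ->]; first by rewrite eqxx.
case/andP: xp => /adj_edge[e tl_e hd_e] zp _.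
by exists e => //; rewrite hd_e; apply/connectP; exists p.
Qed.

Lemma reach_src x i : reach x (src i) -> x = src i.
Proof.
move=> xi; case: (eqVneq x (src i)) => // /(reach_last_edge xi)[e _ hd_e].
by have := sn_src_noin e i; rewrite hd_e eqxx.
Qed.

Lemma reach_term j y : reach (term j) y -> y = term j.
Proof.
move=> jy; case: (eqVneq (term j) y) => // /(reach_first_edge jy)[e tl_e _].
by have := sn_term_noout e j; rewrite tl_e eqxx.
Qed.

Lemma src_neq_term i j : (1 < m)%N ->
  (forall i j, reach (src i) (term j)) -> src i != term j.
Proof.
move=> m_gt1 reach_all; apply/eqP => src_term.
have lt_i' : ((val i == 0%N) < m)%N by case: (val i == 0%N); rewrite // ltnW.
have /eqP : Ordinal lt_i' != i by rewrite -val_eqE /=; case: (val i).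
by apply; apply/sn_src_inj/reach_src; rewrite src_term.
Qed.

Definition depth e := #|[set u | reach u (tl e)]|.

Lemma depth_lt e e' : hd e' = tl e -> (depth e' < depth e)%N.
Proof.
move=> hd_e'; apply/proper_card/properP; split.
  apply/subsetP => u; rewrite !inE => /connect_trans; apply.
  by rewrite -hd_e' connect1 ?edge_adj.
by exists (tl e); rewrite !inE ?connect0 // -hd_e' (sn_acyclic e').
Qed.

Definition upstream v : {set 'I_m} := [set i | reach (src i) v].
Definition downstream v : {set 'I_n} := [set j | reach v (term j)].

Lemma upstream_src i : upstream (src i) = [set i].
Proof.
apply/setP => i'; rewrite !inE; apply/idP/eqP => [/reach_src/sn_src_inj //|->].
exact: connect0.
Qed.

Lemma downstream_term j : downstream (term j) = [set j].
Proof.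
apply/setP => j'; rewrite !inE; apply/idP/eqP => [/reach_term/sn_term_inj //|->].
exact: connect0.
Qed.

Lemma upstream_cover v : (forall i, v != src i) ->
  upstream v = \bigcup_(e | hd e == v) upstream (tl e).
Proof.
move=> not_src; apply/setP => i; rewrite inE; apply/idP/bigcupP.
  move=> iv; have [|e ie hd_e] := reach_last_edge iv; first by rewrite eq_sym.
  by exists e; rewrite ?hd_e ?inE.
case=> e /eqP hd_e; rewrite inE => /connect_trans; apply.
by rewrite -hd_e connect1 ?edge_adj.
Qed.

Lemma downstream_cover v : (forall j, v != term j) ->
  downstream v = \bigcup_(e | tl e == v) downstream (hd e).
Proof.
move=> not_term; apply/setP => j; rewrite inE; apply/idP/bigcupP.
  by move=> vj; have [//|e tl_e ej] := reach_first_edge vj; exists e; rewrite ?tl_e ?inE.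
case=> e /eqP tl_e; rewrite inE; apply: connect_trans.
by rewrite -tl_e connect1 ?edge_adj.
Qed.

Lemma sum_heads_tails (R : nmodType) (phi : E -> R) :
  \sum_v \sum_(e | hd e == v) phi e = \sum_v \sum_(e | tl e == v) phi e.
Proof.
transitivity (\sum_e phi e); first by rewrite (partition_big hd predT).
by rewrite (partition_big tl predT).
Qed.

End Graph.

Section Forward.
Variables (F : fieldType) (n : nat) (N : sum_network 3 n).
Hypothesis reach_all : forall i j, connect (sn_adj N) (sn_src N i) (sn_term N j).
Local Notation tl := (@sn_tail 3 n N).
Local Notation hd := (@sn_head 3 n N).

Section ForwardCode.
Variable B : sn_V N -> sn_E N -> 'M[F]_(2 + 1).
Hypothesis B_span : forall v p,
  symbol_block (\bigcup_(e | hd e == v) upstream (tl e)) p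
    = \sum_(e | hd e == v) symbol_block (upstream (tl e)) p *m B v e.

Definition forward_code : lin_code F N 2 3 :=
  LinCode (fun _ => row_mx 1%:M 0) (fun e' e => B (tl e) e')
    (fun j e' => B (sn_term N j) e' *m sum_proj).

Variables (X : 'I_3 -> 'rV[F]_2) (y : sn_E N -> 'rV[F]_3).
Hypothesis y_cons : consistent forward_code X y.

Lemma forward_symbol e : y e = symbol (upstream (tl e)) X.
Proof.
have [k] := ubnP (depth e); elim: k e => // k IH e /ltnSE le_ek.
case: (pickP (fun i => tl e == sn_src N i)) => [i /eqP tl_e | not_src].
  by rewrite ((y_cons e).1 i tl_e) tl_e upstream_src symbol_set1.
have not_src' i : tl e != sn_src N i by rewrite not_src.
rewrite ((y_cons e).2 not_src') /= (upstream_cover not_src') /symbol.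
under [RHS]eq_bigr do rewrite B_span.
rewrite -sum_mulmx_exchange; apply: eq_bigr => e' /eqP hd_e'.
by rewrite IH //; apply: leq_trans (depth_lt hd_e') le_ek.
Qed.

Lemma forward_output j : terminal_output forward_code y j = \sum_i X i.
Proof.
rewrite /terminal_output /=; under eq_bigr do rewrite forward_symbol.
rewrite sum_mulmx_exchange; apply: eq_bigr => p _.
under eq_bigr do rewrite mulmxA.
rewrite -mulmx_suml -B_span -upstream_cover => [|i]; last first.
  by rewrite eq_sym src_neq_term.
have -> : upstream (sn_term N j) = setT by apply/setP => i; rewrite !inE reach_all.
by rewrite symbol_block_setT_proj mulmx1.
Qed.

End ForwardCode.

Lemma forward_solution : exists C : lin_code F N 2 3, is_solution C.
Proof.
have [B B_span] := fin_all_exists (fun v =>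
  symbol_block_span F (fun e => hd e == v) (fun e => upstream (tl e))).
by exists (forward_code B) => X y y_cons j; apply: forward_output.
Qed.

End Forward.

Section Dual.
Variables (F : fieldType) (m : nat) (N : sum_network m 3).
Hypothesis m_gt1 : (1 < m)%N.
Hypothesis reach_all : forall i j, connect (sn_adj N) (sn_src N i) (sn_term N j).
Local Notation tl := (@sn_tail m 3 N).
Local Notation hd := (@sn_head m 3 N).
Local Notation src := (sn_src N).
Local Notation term := (sn_term N).

Section DualCode.
Variable B : sn_V N -> sn_E N -> 'M[F]_(2 + 1).
Hypothesis B_span : forall v p,
  symbol_block (\bigcup_(e | tl e == v) downstream (hd e)) p
    = \sum_(e | tl e == v) symbol_block (downstream (hd e)) p *m B v e.

Definition dual_code : lin_code F N 2 3 :=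
  LinCode (fun e => (B (tl e) e *m sum_proj)^T) (fun e' e => (B (hd e') e)^T)
    (fun j e' => (symbol_block (downstream (hd e')) j)^T).

Variables (X : 'I_m -> 'rV[F]_2) (y : sn_E N -> 'rV[F]_3) (j : 'I_3).
Hypothesis y_cons : consistent dual_code X y.

Definition flow e := y e *m (symbol_block (downstream (hd e)) j)^T.
Local Notation inflow v := (\sum_(e | hd e == v) flow e).
Local Notation outflow v := (\sum_(e | tl e == v) flow e).

Lemma flow_conserved v :
  (forall i, v != src i) -> (forall j', v != term j') -> outflow v = inflow v.
Proof.
move=> not_src not_term.
under eq_bigr => e /eqP tl_e.
  rewrite /flow ((y_cons e).2 _) /=; last by move=> i; rewrite tl_e.
  rewrite tl_e (eq_bigr (fun e' => y e' *m (B v e)^T)) => [|e' /eqP-> //].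
  over.
rewrite sum_mulmx_exchange; apply: eq_bigr => e' /eqP hd_e'.
rewrite /flow hd_e' (downstream_cover not_term) B_span [in RHS]raddf_sum /=.
by under [in RHS]eq_bigr do rewrite trmx_mul.
Qed.

Lemma outflow_src i : outflow (src i) = X i.
Proof.
under eq_bigr => e /eqP tl_e do
  rewrite /flow ((y_cons e).1 i tl_e) /= tl_e -mulmxA -trmx_mul.
rewrite -mulmx_sumr -raddf_sum /=.
under eq_bigr do rewrite mulmxA.
rewrite -mulmx_suml -B_span -downstream_cover => [|j']; last exact: src_neq_term.
have -> : downstream (src i) = setT by apply/setP => j'; rewrite !inE reach_all.
by rewrite symbol_block_setT_proj trmx1 mulmx1.
Qed.

Lemma inflow_src i : inflow (src i) = 0.
Proof.
by rewrite big1 // => e /eqP hd_e; have := sn_src_noin e i; rewrite hd_e eqxx.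
Qed.

Lemma outflow_term j' : outflow (term j') = 0.
Proof.
by rewrite big1 // => e /eqP tl_e; have := sn_term_noout e j'; rewrite tl_e eqxx.
Qed.

Lemma inflow_term j' :
  inflow (term j') = if j' == j then terminal_output dual_code y j else 0.
Proof.
case: eqP => [-> //|neq_j'j]; rewrite big1 // => e /eqP hd_e.
rewrite /flow hd_e downstream_term symbol_block_notin ?trmx0 ?mulmx0 //.
by rewrite inE eq_sym; apply/eqP.
Qed.

Lemma dual_output : terminal_output dual_code y j = \sum_i X i.
Proof.
have net v : inflow v - outflow v =
    (if v == term j then terminal_output dual_code y j else 0)
    - \sum_i (if v == src i then X i else 0).
  case: (pickP (fun i => v == src i)) => [i /eqP-> | not_src].
    rewrite inflow_src outflow_src (negbTE (src_neq_term _ _ m_gt1 reach_all)) !sub0r.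
    rewrite (bigD1 i) //= eqxx big1 ?addr0 // => i' neq_i'i.
    by rewrite (inj_eq (@sn_src_inj _ _ N)) eq_sym (negbTE neq_i'i).
  have not_src' i : v != src i by rewrite not_src.
  have -> : \sum_i (if v == src i then X i else 0) = 0.
    by apply: big1 => i _; rewrite (negbTE (not_src' i)).
  rewrite subr0.
  case: (pickP (fun j' => v == term j')) => [j' /eqP-> | not_term].
    by rewrite outflow_term subr0 inflow_term (inj_eq (@sn_term_inj _ _ N)).
  rewrite (negbTE (negbT (not_term j))) flow_conserved ?subrr // => j'.
  by rewrite not_term.
apply/eqP; rewrite -subr_eq0; have /eqP := sum_heads_tails flow.
rewrite -subr_eq0 -sumrB (eq_bigr _ (fun v _ => net v)) sumrB -big_mkcond big_pred1_eq.
by rewrite exchange_big /=; under eq_bigr do rewrite -big_mkcond big_pred1_eq.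
Qed.

End DualCode.

Lemma dual_solution : exists C : lin_code F N 2 3, is_solution C.
Proof.
have [B B_span] := fin_all_exists (fun v =>
  symbol_block_span F (fun e => tl e == v) (fun e => downstream (hd e))).
by exists (dual_code B) => X y y_cons j; apply: dual_output.
Qed.

End Dual.

Theorem mainTheorem4 (F : finFieldType) (m n : nat) (N : sum_network m n) :
  minn m n = 3%N ->
  (forall (i : 'I_m) (j : 'I_n), connect (sn_adj N) (sn_src N i) (sn_term N j)) ->
  @linear_capacity_ge F m n N (2%:R / 3%:R).
Proof.
move=> min_mn reach_all q lt_q.
suff [C solC] : exists C : lin_code F N 2 3, is_solution C by exists 2%N, 3%N, C.
case: (leqP m n) => [le_mn | lt_nm].
  have m3 : m = 3%N by rewrite -min_mn (minn_idPl le_mn).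
  by subst m; apply: forward_solution.
have n3 : n = 3%N by rewrite -min_mn (minn_idPr (ltnW lt_nm)).
by subst n; apply: dual_solution => //; apply: leq_trans lt_nm.
Qed.
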